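(* Let $\mathcal J=(\mathcal J_0\subseteq\cdots\subseteq\mathcal J_m)$ be a positive geometric chain of ideals in $\Phi^+$ of length $m$. Then for all $\alpha,\beta\in\Phi^+$ with $\alpha+\beta\in\Phi^+$, \[ r_\alpha(\mathcal J)+r_\beta(\mathcal J)-1\le r_{\alpha+\beta}(\mathcal J)\le r_\alpha(\mathcal J)+r_\beta(\mathcal J). \]
   Context: $\Phi$ is an irreducible crystallographic root system with positive system $\Phi^+$ and simple roots $\Pi$; the root poset is $\alpha\le\beta$ iff $\beta-\alpha$ is a nonnegative combination of positive roots; ideals are down-closed subsets. A geometric chain of ideals of length $m\ge1$ is a chain of ideals $\emptyset=\mathcal J_0\subseteq\mathcal J_1\subseteq\cdots\subseteq\mathcal J_m$ with $(\mathcal J_i+\mathcal J_j)\cap\Phi^+\subseteq\mathcal J_{i+j}$ whenever $i+j\le m$ and $(\mathcal I_i+\mathcal I_j)\cap\Phi^+\subseteq\mathcal I_{i+j}$ for all $i,j\ge 0$, where $\mathcal I_i=\Phi^+\setminus\mathcal J_i$ for $i\le m$ and $\mathcal I_i=\mathcal I_m$ for $i>m$; positive means $\Pi\subseteq\mathcal J_m$. For $\alpha\in\Phi^+$, $r_\alpha(\mathcal J)=\min\{r_1+\cdots+r_k:\ \alpha=\alpha_1+\cdots+\alpha_k,\ \alpha_i\in\mathcal J_{r_i},\ 1\le r_i\le m\}$ (well defined since $\Pi\subseteq\mathcal J_m$). *)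

From HB Require Import structures.
From mathcomp Require Import all_boot all_order all_algebra.
From mathcomp Require Import boolp reals.
Set Implicit Arguments. Unset Strict Implicit. Unset Printing Implicit Defensive.
Import Order.TTheory GRing.Theory Num.Theory.
Local Open Scope ring_scope.

Section RootSystems.
Variables (R : realType) (n : nat).
Implicit Types (Phi Pi : seq 'rV[R]_n) (u v a b : 'rV[R]_n).

Definition dot u v : R := \sum_(i < n) u 0 i * v 0 i.

Definition refl a b : 'rV[R]_n := b - (2 * dot b a / dot a a) *: a.

Definition crystallographic_root_system Phi : Prop :=
  [/\ uniq Phi, Phi != [::], (0 : 'rV[R]_n) \notin Phi &
      (<<Phi>>%VS == fullv)] /\
  [/\
      (forall a c, a \in Phi -> c *: a \in Phi -> c = 1 \/ c = -1),
      (forall a b, a \in Phi -> b \in Phi -> refl a b \in Phi) &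
      (forall a b, a \in Phi -> b \in Phi ->
         exists z : int, 2 * dot b a / dot a a = z%:~R)].

(* irreducible: Phi is not the union of two nonempty orthogonal subsets *)
Definition irreducible Phi : Prop :=
  forall P : 'rV[R]_n -> Prop,
    (exists a, a \in Phi /\ P a) -> (exists b, b \in Phi /\ ~ P b) ->
    exists a b, [/\ a \in Phi, b \in Phi, P a, ~ P b & dot a b != 0].

Definition irreducible_crystallographic_root_system Phi : Prop :=
  crystallographic_root_system Phi /\ irreducible Phi.

Definition is_base Phi Pi : Prop :=
  [/\ {subset Pi <= Phi}, free Pi &
      forall b, b \in Phi -> exists c : 'rV[R]_n -> int,
        b = \sum_(a <- Pi) (c a)%:~R *: a /\
        ((forall a, a \in Pi -> 0 <= c a) \/ (forall a, a \in Pi -> c a <= 0))].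

Definition positive_root Phi Pi b : Prop :=
  b \in Phi /\ exists c : 'rV[R]_n -> int,
    (forall a, a \in Pi -> 0 <= c a) /\ b = \sum_(a <- Pi) (c a)%:~R *: a.

Definition root_le Phi Pi a b : Prop :=
  exists c : 'rV[R]_n -> R,
    [/\ forall g, 0 <= c g,
        forall g, c g != 0 -> positive_root Phi Pi g &
        b - a = \sum_(g <- Phi) c g *: g].

Definition ideal Phi Pi (I : 'rV[R]_n -> Prop) : Prop :=
  (forall a, I a -> positive_root Phi Pi a) /\
  (forall a b, positive_root Phi Pi a -> positive_root Phi Pi b ->
     I b -> root_le Phi Pi a b -> I a).

(* I_k = Phi^+ \ J_k for k <= m, and I_k = I_m for k > m *)
Definition Icomp Phi Pi (m : nat) (J : nat -> 'rV[R]_n -> Prop) (k : nat) a :=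
  positive_root Phi Pi a /\ ~ J (minn k m) a.

Definition geometric_chain Phi Pi (m : nat) (J : nat -> 'rV[R]_n -> Prop) : Prop :=
  (1 <= m)%N /\ [/\
      (forall a, ~ J 0%N a),
      (forall i, (i <= m)%N -> ideal Phi Pi (J i)),
      (forall i a, (i < m)%N -> J i a -> J i.+1 a),
      (forall i j a b, (i + j <= m)%N -> J i a -> J j b ->
          positive_root Phi Pi (a + b) -> J (i + j)%N (a + b)) &
      (forall i j a b, Icomp Phi Pi m J i a -> Icomp Phi Pi m J j b ->
          positive_root Phi Pi (a + b) -> Icomp Phi Pi m J (i + j) (a + b))].

Definition positive_chain Pi (m : nat) (J : nat -> 'rV[R]_n -> Prop) : Prop :=
  forall a, a \in Pi -> J m a.

(* a = a_1 + ... + a_k with a_i in J_{r_i}, 1 <= r_i <= m, and k' = sum r_i *)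
Definition rcost (m : nat) (J : nat -> 'rV[R]_n -> Prop) a (k : nat) : Prop :=
  exists s : seq ('rV[R]_n * nat),
    [/\ a = \sum_(p <- s) p.1,
        (forall p, p \in s -> (1 <= p.2 <= m)%N /\ J p.2 p.1) &
        k = (\sum_(p <- s) p.2)%N].

(* r_a(J): the minimum of such costs (0 by convention if no decomposition) *)
Definition rval (m : nat) (J : nat -> 'rV[R]_n -> Prop) a : nat :=
  match pselect (exists k, `[< rcost m J a k >]) with
  | left H => ex_minn H
  | right _ => 0%N
  end.

End RootSystems.

(* The upper bound holds because optimal decompositions of a and b concatenate to
   one of a + b. For the lower bound, write a + b = g + y with g in J_k and y of cost
   r_{a+b} - k, choosing g with (g, a + b) > 0, which exists since |a + b|^2 > 0; after
   possibly swapping a and b, (a, g) > 0. Then a = g, or a - g is a root. If a - g is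
   positive, induct on the cost of (a - g) + b = y. If g - a is positive, then
   b = (g - a) + y, and a + (g - a) = g lies in J_k: the least levels s, t with a in J_s
   and g - a in J_t satisfy (s - 1) + (t - 1) < k because the complements I_j are
   additively closed, so r_a + r_{g-a} <= k + 1. *)
From HB Require Import structures.
From mathcomp Require Import all_boot all_order all_algebra.
From mathcomp Require Import boolp reals.
From mathcomp Require Import ring lra zify.
Import Order.TTheory GRing.Theory Num.Theory.
Set Implicit Arguments. Unset Strict Implicit.
Local Open Scope ring_scope.

Section DotProduct.
Variables (R : realType) (n : nat).
Implicit Types u v w : 'rV[R]_n.

Lemma dotC u v : dot u v = dot v u.
Proof. by apply: eq_bigr => i _; rewrite mulrC. Qed.

Lemma dot0l v : dot 0 v = 0.
Proof. by rewrite /dot big1 // => i _; rewrite mxE mul0r. Qed.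

Lemma dotDl u v w : dot (u + v) w = dot u w + dot v w.
Proof. by rewrite /dot -big_split; apply: eq_bigr => i _; rewrite mxE mulrDl. Qed.

Lemma dotNl u w : dot (- u) w = - dot u w.
Proof. by rewrite /dot -sumrN; apply: eq_bigr => i _; rewrite mxE mulNr. Qed.

Lemma dotBB u v : dot (u - v) (u - v) = dot u u - 2 * dot u v + dot v v.
Proof.
rewrite dotDl dotNl (dotC u) (dotC v) !dotDl !dotNl (dotC v u); ring.
Qed.

Lemma dot_suml (I : Type) (r : seq I) (F : I -> 'rV[R]_n) w :
  dot (\sum_(i <- r) F i) w = \sum_(i <- r) dot (F i) w.
Proof. by rewrite (big_morph (fun u => dot u w) (fun u v => dotDl u v w) (dot0l w)). Qed.

Lemma dot_ge0 u : 0 <= dot u u.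
Proof. by apply: sumr_ge0 => i _; rewrite -expr2 sqr_ge0. Qed.

Lemma dot_eq0 u : (dot u u == 0) = (u == 0).
Proof.
apply/eqP/eqP => [u0|->]; last exact: dot0l.
apply/rowP => j; rewrite mxE.
have sq_ge0 (k : 'I_n) : true -> 0 <= u 0 k * u 0 k by rewrite -expr2 sqr_ge0.
by have /eqP := @psumr_eq0P _ _ xpredT _ sq_ge0 u0 j isT; rewrite mulf_eq0 orbb => /eqP.
Qed.

Lemma dot_gt0 u : u != 0 -> 0 < dot u u.
Proof. by rewrite lt_def dot_ge0 dot_eq0 => ->. Qed.

End DotProduct.

Section RootSystem.
Variables (R : realType) (n : nat) (Phi Pi : seq 'rV[R]_n).
Hypothesis Phi_root_system : crystallographic_root_system Phi.

Lemma root_neq0 a : a \in Phi -> a != 0.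
Proof. by case: Phi_root_system => -[_ _ Phi0 _] _ Phia; apply: contraNneq Phi0 => <-. Qed.

Lemma rootN a : a \in Phi -> - a \in Phi.
Proof.
move=> Phia; have aa_neq0 : dot a a != 0 by rewrite dot_eq0 root_neq0.
case: Phi_root_system => _ [_ refl_root _].
have := refl_root a a Phia Phia; rewrite /refl mulfK //.
by rewrite scaler_nat mulr2n opprD addNKr.
Qed.

(* Both Cartan integers <a, g> and <g, a> are positive; if one of them is 1 the
   reflection produces +-(a - g), and if both are >= 2 then |a - g|^2 <= 0. *)
Lemma rootB a g : a \in Phi -> g \in Phi -> 0 < dot a g -> a != g ->
  a - g \in Phi.
Proof.
move=> Phia Phig ag_gt0 neq_ag.
have aa_gt0 := dot_gt0 (root_neq0 Phia); have gg_gt0 := dot_gt0 (root_neq0 Phig).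
case: Phi_root_system => _ [_ refl_root cartan].
have [z1 Ez1] := cartan g a Phig Phia.
have [z2 Ez2] := cartan a g Phia Phig; rewrite dotC in Ez2.
have z1_gt0 : 0 < z1 by rewrite -(ltr0z R) -Ez1 divr_gt0 ?mulr_gt0.
have z2_gt0 : 0 < z2 by rewrite -(ltr0z R) -Ez2 divr_gt0 ?mulr_gt0.
have [z1_1|z1_neq1] := eqVneq z1 1.
  by have := refl_root g a Phig Phia; rewrite /refl Ez1 z1_1 scale1r.
have [z2_1|z2_neq1] := eqVneq z2 1.
  have := refl_root a g Phia Phig; rewrite /refl dotC Ez2 z2_1 scale1r.
  by move=> /rootN; rewrite opprB.
have two_le_cartan z : 0 < z -> z != 1 -> 2 <= z%:~R :> R.
  by move=> z_gt0 z_neq1; rewrite (_ : 2 = 2%:~R) // ler_int; lia.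
have := two_le_cartan _ z1_gt0 z1_neq1; rewrite -Ez1 ler_pdivlMr // => le1.
have := two_le_cartan _ z2_gt0 z2_neq1; rewrite -Ez2 ler_pdivlMr // => le2.
have : dot (a - g) (a - g) == 0 by rewrite eq_le dot_ge0 andbT dotBB; lra.
by rewrite dot_eq0 subr_eq0 (negbTE neq_ag).
Qed.

Hypothesis Pi_base : is_base Phi Pi.

Lemma positive_or_negative a : a \in Phi ->
  positive_root Phi Pi a \/ positive_root Phi Pi (- a).
Proof.
case: Pi_base => _ _ base_expansion Phia.
have [c [Ea [c_ge0|c_le0]]] := base_expansion a Phia.
  by left; split => //; exists c.
right; split; first exact: rootN.
exists (fun p => - c p); split; first by move=> p /c_le0; lia.
by rewrite Ea -sumrN; apply: eq_bigr => p _; rewrite intrN scaleNr.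
Qed.

(* The coordinates of a + b on the free family Pi are sums of nonnegative integers. *)
Lemma positive_addr_neq0 a b :
  positive_root Phi Pi a -> positive_root Phi Pi b -> a + b != 0.
Proof.
case: Pi_base => _ free_Pi _ [Phia [c [c_ge0 Ea]]] [_ [d [d_ge0 Eb]]].
apply/eqP => ab0.
have : \sum_(i < size Pi) (c Pi`_i + d Pi`_i)%:~R *: (in_tuple Pi)`_i = 0.
  apply: etrans ab0; rewrite Ea Eb -big_split /= (big_nth 0) big_mkord.
  by apply: eq_bigr => i _; rewrite intrD scalerDl.
move/(@freeP _ _ _ (in_tuple Pi) free_Pi) => cd0.
have c0 (i : 'I_(size Pi)) : c Pi`_i = 0.
  have Pi_i := mem_nth 0 (ltn_ord i).
  have /eqP := cd0 i.
  by rewrite intr_eq0 (paddr_eq0 (c_ge0 _ Pi_i) (d_ge0 _ Pi_i)) => /andP[/eqP].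
have /eqP[] := root_neq0 Phia.
by rewrite Ea (big_nth 0) big_mkord big1 // => i _; rewrite c0 scale0r.
Qed.

Lemma root_le_addr a b : positive_root Phi Pi b -> root_le Phi Pi a (a + b).
Proof.
move=> posb; have [Phib _] := posb.
case: Phi_root_system => -[uniq_Phi _ _ _] _.
exists (fun g => if g == b then 1 else 0); split.
- by move=> g; case: ifP.
- by move=> g; case: ifP => [/eqP -> //|]; rewrite eqxx.
- rewrite addrC addKr (bigD1_seq b) //= eqxx scale1r big1 ?addr0 //.
  by move=> g /negbTE ->; rewrite scale0r.
Qed.

End RootSystem.

Section Decompositions.
Variables (R : realType) (n : nat) (m : nat) (J : nat -> 'rV[R]_n -> Prop).
Implicit Types (a b x : 'rV[R]_n) (k : nat).

Lemma rcost0 : rcost m J 0 0.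
Proof. by exists [::]; split => //; rewrite big_nil. Qed.

Lemma rcost1 a k : (1 <= k <= m)%N -> J k a -> rcost m J a k.
Proof. by exists [:: (a, k)]; split; rewrite ?big_seq1 // => p /[1!inE] /eqP ->. Qed.

Lemma rcostD a b k1 k2 :
  rcost m J a k1 -> rcost m J b k2 -> rcost m J (a + b) (k1 + k2).
Proof.
move=> [s1 [-> s1J ->]] [s2 [-> s2J ->]]; exists (s1 ++ s2).
by split; rewrite ?big_cat // => p; rewrite mem_cat => /orP[/s1J|/s2J].
Qed.

Lemma rval_le a k : rcost m J a k -> (rval m J a <= k)%N.
Proof.
move=> cost_k; rewrite /rval; case: pselect => [ex|[]]; last by exists k; apply/asboolP.
by case: ex_minnP => k0 _; apply; apply/asboolP.
Qed.

Lemma rval_le_level a k : (1 <= k <= m)%N -> J k a -> (rval m J a <= k)%N.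
Proof. by move=> km /(rcost1 km) /rval_le. Qed.

Lemma rcost_rval a : (exists k, rcost m J a k) -> rcost m J a (rval m J a).
Proof.
move=> [k cost_k]; rewrite /rval; case: pselect => [ex|[]]; last by exists k; apply/asboolP.
by case: ex_minnP => k0 /asboolP.
Qed.

Lemma rcost_split_positive x k : x != 0 -> rcost m J x k ->
  exists g kg y ky, [/\ (1 <= kg <= m)%N /\ J kg g, rcost m J y ky,
                       x = g + y, k = (kg + ky)%N & 0 < dot g x].
Proof.
move=> x_neq0 [s [Ex sJ Ek]].
have /hasP[p s_p gx_gt0] : has (fun p => 0 < dot p.1 x) s.
  apply: contraTT (dot_gt0 x_neq0) => /hasPn s_le0.
  rewrite -leNgt {1}Ex dot_suml big_seq sumr_le0 // => p /s_le0.
  by rewrite -leNgt.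
have s_perm := perm_to_rem s_p; have [kgm Jg] := sJ p s_p.
exists p.1, p.2, (\sum_(q <- rem p s) q.1), (\sum_(q <- rem p s) q.2)%N.
split=> //; last by rewrite Ek (perm_big _ s_perm) big_cons.
- by exists (rem p s); split=> // q /mem_rem /sJ.
- by rewrite Ex (perm_big _ s_perm) big_cons.
Qed.

End Decompositions.

Section GeometricChain.
Variables (R : realType) (n : nat) (Phi Pi : seq 'rV[R]_n).
Variables (m : nat) (J : nat -> 'rV[R]_n -> Prop).
Hypotheses (Phi_root_system : crystallographic_root_system Phi)
           (Pi_base : is_base Phi Pi)
           (J_geometric : geometric_chain Phi Pi m J)
           (J_positive : positive_chain Pi m J).
Implicit Types (a b g : 'rV[R]_n) (k : nat).

Local Notation pos := (positive_root Phi Pi).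
Local Notation r := (rval m J).

Lemma chain_positive k a : (k <= m)%N -> J k a -> pos a.
Proof. by case: J_geometric => _ [_ J_ideal _ _ _] /J_ideal[J_pos _] /J_pos. Qed.

Lemma chain_mono i j a : (i <= j <= m)%N -> J i a -> J j a.
Proof.
case: J_geometric => _ [_ _ J_succ _ _].
elim: j => [|j IHj]; first by rewrite leqn0 => /andP[/eqP ->].
rewrite leq_eqVlt => /andP[/orP[/eqP <- //|ij jm] Jia].
by apply: J_succ => //; apply: IHj; rewrite // -ltnS ij ltnW.
Qed.

Lemma chain_summand k a b : (k <= m)%N -> pos a -> pos b -> J k (a + b) -> J k a.
Proof.
case: J_geometric => _ [_ J_ideal _ _ _] km posa posb Jab.
have [_ J_down] := J_ideal k km.
exact: J_down posa (chain_positive km Jab) Jab (root_le_addr Phi_root_system _ posb).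
Qed.

Lemma chain_first_level k a : J k a -> exists2 s, (1 <= s <= k)%N & J s a /\ ~ J s.-1 a.
Proof.
case: J_geometric => _ [J0 _ _ _ _]; elim: k => [/J0 []|k IHk Jk].
have [/IHk [s /andP[s_gt0 sk] Js]|nJk] := pselect (J k a).
  by exists s; rewrite // s_gt0 leqW.
by exists k.+1; rewrite ?leqnn.
Qed.

Lemma rcost_exists a : pos a -> exists k, rcost m J a k.
Proof.
case: J_geometric => m_gt0 _ [_ [c [c_ge0 ->]]].
have rcost_mul p k : p \in Pi -> exists k', rcost m J (k%:R *: p) k'.
  move=> Pi_p; elim: k => [|k [k' cost_k']]; first by exists 0%N; rewrite scale0r; apply: rcost0.
  exists (m + k')%N; rewrite mulrS scalerDl scale1r; apply: rcostD cost_k'.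
  by apply: rcost1; [rewrite m_gt0 leqnn | apply: J_positive].
have : {subset Pi <= Pi} by [].
elim: {-2}Pi => [|p P IHP] sub_P; first by exists 0%N; rewrite big_nil; apply: rcost0.
have Pi_p : p \in Pi by apply: sub_P; rewrite inE eqxx.
have [|k1 cost1] := IHP; first by move=> q P_q; apply: sub_P; rewrite inE P_q orbT.
have := c_ge0 p Pi_p; rewrite big_cons; case: (c p) => // k _.
by have [k2 cost2] := rcost_mul p k Pi_p; exists (k2 + k1)%N; apply: rcostD.
Qed.

Lemma rcost_rval_positive a : pos a -> rcost m J a (r a).
Proof. by move=> /rcost_exists; apply: rcost_rval. Qed.

Lemma r_add_le_level k a b : (1 <= k <= m)%N -> pos a -> pos b -> J k (a + b) ->
  (r a + r b <= k.+1)%N.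
Proof.
move=> /andP[k_gt0 km] posa posb Jab.
case: J_geometric => _ [_ _ _ _ I_add].
have posab := chain_positive km Jab.
have [s /andP[s_gt0 sk] [Js nJs]] := chain_first_level (chain_summand km posa posb Jab).
have [t /andP[t_gt0 tk] [Jt nJt]] :=
  chain_first_level (chain_summand km posb posa (eq_ind _ _ Jab _ (addrC a b))).
have Ia : Icomp Phi Pi m J s.-1 a by split; rewrite // (minn_idPl _) //; lia.
have Ib : Icomp Phi Pi m J t.-1 b by split; rewrite // (minn_idPl _) //; lia.
have [_ nJst] := I_add _ _ _ _ Ia Ib posab.
have st_lt_k : (s.-1 + t.-1 < k)%N.
  rewrite ltnNge; apply/negP => kst; apply: nJst; apply: chain_mono Jab.
  by rewrite leq_min kst km geq_minr.
have sm : (1 <= s <= m)%N by rewrite s_gt0 (leq_trans sk km).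
have tm : (1 <= t <= m)%N by rewrite t_gt0 (leq_trans tk km).
have := rval_le_level sm Js; have := rval_le_level tm Jt; lia.
Qed.

Lemma r_add_le_peel a b g kg y ky :
  pos a -> pos b -> a + b = g + y -> (1 <= kg <= m)%N -> J kg g ->
  rcost m J y ky -> 0 < dot a g ->
  (forall a' b', pos a' -> pos b' -> a' + b' = y -> (r a' + r b' <= ky.+1)%N) ->
  (r a + r b <= (kg + ky).+1)%N.
Proof.
move=> posa posb Eab kgm Jg cost_y ag_gt0 IHy.
have r_g := rval_le_level kgm Jg.
have [eq_ag|neq_ag] := eqVneq a g.
  by move: Eab r_g; rewrite -eq_ag => /addrI ->; have := rval_le cost_y; lia.
have Phia : a \in Phi by case: posa.
have Phig : g \in Phi by case: (chain_positive (proj2 (andP kgm)) Jg).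
have Phi_ag := rootB Phi_root_system Phia Phig ag_gt0 neq_ag.
case: (positive_or_negative Phi_root_system Pi_base Phi_ag) => [pos_ag|].
  have Eagb : (a - g) + b = y by rewrite addrAC Eab addrC addKr.
  have := IHy _ _ pos_ag posb Eagb.
  have := rval_le (rcostD (rcost_rval_positive pos_ag) (rcost1 kgm Jg)); rewrite subrK; lia.
rewrite opprB => pos_ga.
have Jg' : J kg (a + (g - a)) by rewrite addrC subrK.
have := r_add_le_level kgm posa pos_ga Jg'.
have Eb : (g - a) + y = b by apply: (addrI a); rewrite Eab addrA [a + _]addrC subrK.
have := rval_le (rcostD (rcost_rval_positive pos_ga) cost_y); rewrite Eb; lia.
Qed.

Lemma r_add_le k a b : pos a -> pos b -> rcost m J (a + b) k -> (r a + r b <= k.+1)%N.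
Proof.
elim/ltn_ind: k a b => k IHk a b posa posb cost_ab.
have ab_neq0 := positive_addr_neq0 Phi_root_system Pi_base posa posb.
have [g [kg [y [ky [[kgm Jg] cost_y Eab Ek gab_gt0]]]]] := rcost_split_positive ab_neq0 cost_ab.
have IHy a' b' : pos a' -> pos b' -> a' + b' = y -> (r a' + r b' <= ky.+1)%N.
  move=> posa' posb' Ey; apply: IHk; rewrite ?Ey //.
  by rewrite Ek; case/andP: kgm; lia.
rewrite Ek; rewrite dotC dotDl in gab_gt0.
have [ag_gt0|ag_le0] := ltrP 0 (dot a g).
  exact: r_add_le_peel posa posb Eab kgm Jg cost_y ag_gt0 IHy.
rewrite addnC; apply: r_add_le_peel posb posa _ kgm Jg cost_y _ IHy.
  by rewrite addrC.
lra.
Qed.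

End GeometricChain.

Theorem corollary3p4 (R : realType) (n : nat) (Phi Pi : seq 'rV[R]_n)
    (m : nat) (J : nat -> 'rV[R]_n -> Prop) :
  irreducible_crystallographic_root_system Phi ->
  is_base Phi Pi ->
  geometric_chain Phi Pi m J ->
  positive_chain Pi m J ->
  forall a b : 'rV[R]_n,
    positive_root Phi Pi a -> positive_root Phi Pi b ->
    positive_root Phi Pi (a + b) ->
    (rval m J a + rval m J b - 1 <= rval m J (a + b) <= rval m J a + rval m J b)%N.
Proof.
move=> [Phi_root_system _] Pi_base J_geometric J_positive a b posa posb posab.
have r_cost := rcost_rval_positive J_geometric J_positive.
have lower := r_add_le Phi_root_system Pi_base J_geometric J_positive posa posb (r_cost _ posab).
have upper := rval_le (rcostD (r_cost _ posa) (r_cost _ posb)).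
by rewrite upper andbT; lia.
Qed.
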